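(* Let $n\ge3$ and $A\subseteq[n-1]$ nonempty, let $w=\max A$ and $A'=A\setminus\{w\}$. If $w=n-1$, then $f_n(A)=2f_{n-1}(A')$.
   Context: For $m\ge1$ and a set $B$ of positive integers, $f_m(B)$ denotes the number of linear orders $q$ on $[m]$ such that for every triple $i<j<k$ in $[m]$: if $j\in B$ then $i$ is not ranked last among $\{i,j,k\}$ in $q$, and if $j\notin B$ then $k$ is not ranked first among $\{i,j,k\}$ in $q$ (i.e. $f_m(B)$ is the size of the set-alternating domain on $[m]$ generated by $B\cap[m]$). *)

From mathcomp Require Import all_boot all_fingroup.
Set Implicit Arguments. Unset Strict Implicit. Unset Printing Implicit Defensive.

(* A linear order q on [m] = {1,...,m} is encoded by a permutation
   pos : 'S_m giving the rank (position) of each element; element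
   i : 'I_m stands for the integer i+1 of [m].  x is ranked before y in q
   iff pos x < pos y. *)

Definition sa_triple (B : pred nat) (m : nat) (pos : 'S_m) (i j k : 'I_m) : bool :=
  if j.+1 \in B then
    ~~ ((pos j < pos i) && (pos k < pos i))
  else
    ~~ ((pos k < pos i) && (pos k < pos j)).

Definition set_alternating (B : pred nat) (m : nat) (pos : 'S_m) : bool :=
  [forall i : 'I_m, forall j : 'I_m, forall k : 'I_m,
     ((i < j) && (j < k)) ==> sa_triple B pos i j k].

Definition f (m : nat) (B : pred nat) : nat :=
  #|[set pos : 'S_m | set_alternating B pos]|.

(* Suppose n-1 is in A.  For every i < n-1 the triple (i, n-1, n) forbids i to
   be ranked last, so the last-ranked element is n-1 or n.  Exchanging the
   ranks of n-1 and n preserves set-alternation: triples through only one of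
   them impose the same condition on either, and the condition on
   (i, n-1, n) is symmetric in the two.  Hence both cases are equinumerous.
   When n is ranked last it satisfies every triple, and deleting it leaves an
   arbitrary set-alternating order on [n-1], whose triples never ask whether
   n-1 is in A.  So only w \in A and w = n-1 are used, not the maximality of w
   or A being a subset of [n-1]. *)

From mathcomp Require Import all_boot all_fingroup.
Set Implicit Arguments. Unset Strict Implicit. Unset Printing Implicit Defensive.

Lemma set_alternatingP (B : pred nat) m (pos : 'S_m) :
  reflect (forall i j k : 'I_m, i < j -> j < k -> sa_triple B pos i j k)
          (set_alternating B pos).
Proof.
apply: (iffP forallP) => [h i j k ij jk | h i].
  by move: (h i) => /forallP/(_ j)/forallP/(_ k); rewrite ij jk.
apply/forallP => j; apply/forallP => k; apply/implyP => /andP[]; exact: h.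
Qed.

Lemma eq_set_alternating (B B' : pred nat) m (pos : 'S_m) :
  (forall x, x < m -> (x \in B) = (x \in B')) ->
  set_alternating B pos = set_alternating B' pos.
Proof.
move=> eqBB'; apply/set_alternatingP/set_alternatingP => h i j k ij jk;
  have := h i j k ij jk;
  rewrite /sa_triple eqBB' //; exact: leq_ltn_trans jk (ltn_ord k).
Qed.

Lemma eq_f (B B' : pred nat) m :
  (forall x, x < m -> (x \in B) = (x \in B')) -> f m B = f m B'.
Proof.
by move=> eqBB'; apply: eq_card => pos; rewrite !inE (eq_set_alternating _ eqBB').
Qed.

Lemma sa_triple_lift_max (B : pred nat) m (s : 'S_m) (i j k : 'I_m) :
  sa_triple B (lift_perm ord_max ord_max s)
    (lift ord_max i) (lift ord_max j) (lift ord_max k) = sa_triple B s i j k.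
Proof. by rewrite /sa_triple !lift_perm_lift !lift_max. Qed.

Lemma sa_triple_ranked_last (B : pred nat) m (pos : 'S_m.+1) (i j k : 'I_m.+1) :
  pos k = ord_max -> sa_triple B pos i j k.
Proof.
move=> pk; have top x : (pos k < pos x) = false by rewrite pk ltnNge leq_ord.
by rewrite /sa_triple !top andbF; case: ifP.
Qed.

Lemma lift_max_of_lt m (j k : 'I_m.+1) : j < k -> {j' : 'I_m | j = lift ord_max j'}.
Proof.
move=> jk; have jm : j < m := leq_trans jk (leq_ord k).
by exists (Ordinal jm); apply: val_inj; rewrite /= /bump leqNgt jm.
Qed.

Lemma set_alternating_lift_max (B : pred nat) m (s : 'S_m) :
  set_alternating B (lift_perm ord_max ord_max s) = set_alternating B s.
Proof.
apply/set_alternatingP/set_alternatingP => h i j k ij jk.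
  by rewrite -sa_triple_lift_max; apply: h; rewrite !lift_max.
case: (unliftP ord_max k) => [k'|] ek; last first.
  by apply: sa_triple_ranked_last; rewrite ek lift_perm_id.
have [j' ej] := lift_max_of_lt jk; have [i' ei] := lift_max_of_lt ij.
rewrite ek ej ei sa_triple_lift_max; apply: h.
  by move: ij; rewrite ei ej !lift_max.
by move: jk; rewrite ej ek !lift_max.
Qed.

Lemma lift_perm_inj m (i j : 'I_m.+1) : injective (@lift_perm m i j).
Proof.
move=> s t eq_st; apply/permP => k; apply: (@lift_inj _ j).
by rewrite -!(lift_perm_lift i) eq_st.
Qed.

Lemma lift_perm_fixed m (i : 'I_m.+1) (s : 'S_m.+1) :
  s i = i -> exists t : 'S_m, s = lift_perm i i t.
Proof.
move=> si; have lift_neq k : i != s (lift i k).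
  by rewrite -[X in X != _]si (inj_eq perm_inj) neq_lift.
pose g k := odflt k (unlift i (s (lift i k))).
have gK k : lift i (g k) = s (lift i k).
  by rewrite /g; have [k' -> ->] := unlift_some (lift_neq k).
have g_inj : injective g.
  by move=> a b /(congr1 (lift i)); rewrite !gK => /perm_inj/lift_inj.
exists (perm g_inj); apply/permP => k.
by case: (unliftP i k) => [k'|] ->; rewrite ?lift_perm_id ?lift_perm_lift ?permE ?gK.
Qed.

Definition ranked_last (B : pred nat) m (z : 'I_m.+1) : {set 'S_m.+1} :=
  [set pos | set_alternating B pos & pos z == ord_max].

Lemma card_ranked_last_max (B : pred nat) m :
  #|ranked_last B (ord_max : 'I_m.+1)| = f m B.
Proof.
rewrite /f -[RHS](card_imset _ (@lift_perm_inj m ord_max ord_max)).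
apply: eq_card => pos; rewrite inE; apply/andP/imsetP => [[sa /eqP fixed]|[s]].
  have [s def_pos] := lift_perm_fixed fixed; exists s => //.
  by rewrite inE -set_alternating_lift_max -def_pos.
by rewrite inE => sa ->; rewrite lift_perm_id set_alternating_lift_max.
Qed.

Definition ord_penult m : 'I_m.+2 := Ordinal (leqnSn m.+1).

Lemma ord_penult_neq_max m : ord_penult m != ord_max.
Proof. by rewrite -val_eqE /= ltn_eqF. Qed.

Lemma ord_last_two m (k : 'I_m.+2) : [\/ k = ord_max, k = ord_penult m | k < m].
Proof.
case: (ltngtP k m) => [km | mk | km]; [by constructor 3 | constructor 1 | constructor 2];
  apply: val_inj => //=.
by apply/eqP; rewrite eqn_leq -ltnS ltn_ord.
Qed.

Section LastTwo.

Variables (B : pred nat) (m : nat).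
Hypothesis penult_in : m.+1 \in B.

Local Notation top := (ord_max : 'I_m.+2).
Local Notation penult := (ord_penult m).

Lemma ranked_last_top_or_penult (pos : 'S_m.+2) :
  set_alternating B pos -> (pos top == ord_max) || (pos penult == ord_max).
Proof.
move=> /set_alternatingP sa; apply/negPn/negP; rewrite negb_or => /andP[top_lt penult_lt].
set k := (pos^-1)%g ord_max; have pk : pos k = ord_max by rewrite permKV.
have below_k z : pos z != ord_max -> pos z < pos k.
  by rewrite pk -val_eqE /= ltn_neqAle -ltnS ltn_ord andbT.
case: (ord_last_two k) => [kt | kp | km].
- by rewrite kt in pk; rewrite pk eqxx in top_lt.
- by rewrite kp in pk; rewrite pk eqxx in penult_lt.
have := sa k penult top km (ltnSn m).
by rewrite /sa_triple /= penult_in !below_k.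
Qed.

Lemma set_alternating_swap_last_two (pos : 'S_m.+2) :
  set_alternating B pos -> set_alternating B (tperm top penult * pos)%g.
Proof.
move=> /set_alternatingP sa; apply/set_alternatingP => i j k ij jk.
have fix_low (z : 'I_m.+2) : z < m -> tperm top penult z = z.
  by move=> zm; rewrite tpermD // -val_eqE /= gtn_eqF // leqW.
rewrite /sa_triple !permM.
case: (ord_last_two k) => [kt | kp | km].
- rewrite kt tpermL; case: (ord_last_two j) => [jt | jp | jm].
  + by move: jk; rewrite jt kt ltnn.
  + have im : i < m by rewrite jp in ij.
    rewrite jp tpermR fix_low //.
    have := sa i penult top im (ltnSn m).
    by rewrite /sa_triple /= penult_in andbC.
  + by rewrite !fix_low ?(ltn_trans ij jm) //; exact: sa.
- have jm : j < m by rewrite kp in jk.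
  by rewrite kp tpermR !fix_low ?(ltn_trans ij jm) //; apply: sa; rewrite // leqW.
- have jm := ltn_trans jk km.
  by rewrite !fix_low ?(ltn_trans ij jm) //; exact: sa.
Qed.

Lemma card_ranked_last_penult : #|ranked_last B penult| = #|ranked_last B top|.
Proof.
rewrite -[RHS](card_imset _ (mulgI (tperm top penult))).
apply: eq_card => pos; rewrite inE; apply/andP/imsetP => [[sa /eqP pos_penult] | [p]].
  exists (tperm top penult * pos)%g; last by rewrite tpermKg.
  by rewrite inE set_alternating_swap_last_two //= permM tpermL pos_penult.
rewrite inE => /andP[sa /eqP p_top] ->.
by rewrite set_alternating_swap_last_two // permM tpermR p_top.
Qed.

Lemma f_split_last_two :
  f m.+2 B = #|ranked_last B top| + #|ranked_last B penult|.
Proof.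
rewrite /f -(cardsID [set pos : 'S_m.+2 | pos top == ord_max]).
congr (_ + _); apply: eq_card => pos; rewrite !inE //.
apply/andP/andP => [[top_lt sa] | [sa /eqP pos_penult]]; split => //.
  by have := ranked_last_top_or_penult sa; rewrite (negbTE top_lt).
apply: contra (ord_penult_neq_max m) => /eqP pos_top.
by rewrite -(inj_eq (@perm_inj _ pos)) pos_top pos_penult.
Qed.

Lemma f_double : f m.+2 B = 2 * f m.+1 B.
Proof.
by rewrite f_split_last_two card_ranked_last_penult card_ranked_last_max addnn mul2n.
Qed.

End LastTwo.

Theorem proposition4 (n : nat) (A : pred nat) (w : nat) :
  3 <= n ->
  (forall x, x \in A -> 1 <= x <= n.-1) ->   (* A ⊆ [n-1] *)
  w \in A ->                                  (* A nonempty, w ∈ A *)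
  (forall x, x \in A -> x <= w) ->            (* w = max A *)
  w = n.-1 ->
  f n A = 2 * f n.-1 [pred x | (x \in A) && (x != w)].
Proof.
move=> n_ge3 _ wA _ w_def; subst w.
case: n n_ge3 wA => [|[|m]] // _ /= penult_in.
rewrite f_double //; congr (2 * _); apply: eq_f => x x_lt.
by rewrite inE (ltn_eqF x_lt) andbT.
Qed.
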